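(* Let $\alpha=\exp\left(\frac{2\pi i}{5}\right)$, let $c,x\in\mathbb{C}$, and let $(a_1,A_1),\dots,(a_p,A_p)$ and $(b_1,B_1),\dots,(b_q,B_q)$ be parameter pairs ($a_j,b_j\in\mathbb{C}$, $A_j,B_j$ nonzero reals) such that all Gamma functions involved are well defined and all series involved converge. Then $$\sum_{k=0}^{4}{}_p\Psi_q\left[\begin{array}{c}(a_1,A_1),\dots,(a_p,A_p);\\(b_1,B_1),\dots,(b_q,B_q);\end{array} c(x\alpha^k)^2\right] =5\prod_{i=1}^{4}\Gamma\!\left(\tfrac{i}{5}\right)\,{}_p\Psi_{q+4}\left[\begin{array}{c}(a_1,5A_1),\dots,(a_p,5A_p);\\ \left(\tfrac15,1\right),\left(\tfrac25,1\right),\left(\tfrac35,1\right),\left(\tfrac45,1\right),(b_1,5B_1),\dots,(b_q,5B_q);\end{array}\left(\frac{cx^2}{5}\right)^5\right].$$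
   Context: The Fox–Wright function is defined by the series $${}_p\Psi_q\left[\begin{array}{c}(\alpha_1,A_1),\dots,(\alpha_p,A_p);\\(\beta_1,B_1),\dots,(\beta_q,B_q);\end{array}z\right]=\sum_{n=0}^{\infty}\frac{\Gamma(\alpha_1+A_1n)\cdots\Gamma(\alpha_p+A_pn)}{\Gamma(\beta_1+B_1n)\cdots\Gamma(\beta_q+B_qn)}\frac{z^n}{n!},$$ where $\alpha_i,\beta_j\in\mathbb{C}$ and $A_i,B_j$ are nonzero real numbers chosen so that the Gamma products are well defined. Values of parameters and variables for which the expressions do not make sense are excluded. *)

From Stdlib Require Import Reals List ClassicalEpsilon Factorial.
From Coquelicot Require Import Coquelicot.
Import ListNotations.
Open Scope R_scope.

Definition Cexp (z : C) : C :=
  (exp (Re z) * cos (Im z), exp (Re z) * sin (Im z)).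

Fixpoint Cpoch0 (z : C) (n : nat) : C :=
  match n with
  | O => z
  | S m => Cmult (Cpoch0 z m) (Cplus z (RtoC (INR (S m))))
  end.

(* Gauss' product formula: n^z n! / (z (z+1) ... (z+n)) *)
Definition gauss_seq (z : C) (n : nat) : C :=
  Cdiv (Cmult (Cexp (Cmult z (RtoC (ln (INR n))))) (RtoC (INR (fact n))))
       (Cpoch0 z n).

(* The (complex) Gamma function, defined as the limit of Gauss' sequence
   (this is valid for every z that is not a nonpositive integer). *)
Definition CGamma (z : C) : C :=
  epsilon (inhabits (RtoC 0))
    (fun l => filterlim (gauss_seq z) eventually (locally l)).

Definition Gamma_pole (z : C) : Prop := exists m : nat, z = RtoC (- INR m).

Definition CSeries (a : nat -> C) : C :=
  epsilon (inhabits (RtoC 0)) (fun l => is_series a l).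

Definition Gamma_prod (ps : list (C * R)) (n : nat) : C :=
  fold_right (fun p acc => Cmult (CGamma (Cplus (fst p) (RtoC (snd p * INR n)))) acc)
             (RtoC 1) ps.

(* n-th term of the Fox--Wright series pPsi_q[(alpha_i,A_i);(beta_j,B_j); z] *)
Definition FW_term (als bes : list (C * R)) (z : C) (n : nat) : C :=
  Cmult (Cdiv (Gamma_prod als n) (Gamma_prod bes n))
        (Cdiv (Cpow z n) (RtoC (INR (fact n)))).

Definition FoxWright (als bes : list (C * R)) (z : C) : C :=
  CSeries (FW_term als bes z).

Definition scale_pars (s : R) (ps : list (C * R)) : list (C * R) :=
  map (fun p => (fst p, s * snd p)) ps.

Definition alpha5 : C := Cexp (0, 2 * PI / 5).

(* Write z = c x^2.  The k-th series on the left has terms FW_n(z) alpha^(2nk), so summing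
   over k applies the filter sum_k alpha^(2nk), which is 5 when 5 | n and 0 otherwise: only the
   terms n = 5q survive, each multiplied by 5.  These are matched with the terms of the series
   on the right by Gauss's multiplication formula
     (5q)! = 5^(5q) q! (1/5)_q (2/5)_q (3/5)_q (4/5)_q
   together with Gamma(i/5 + q) = Gamma(i/5) (i/5)_q.  For the latter, Gamma on the positive
   reals is the limit of Gauss's sequence g(n) = n^r n! / (r (r+1) ... (r+n)), which converges
   to a positive limit because g is increasing while g(n) exp(r(1+r)/n) is decreasing; in
   particular Gamma(i/5) <> 0 and can be cancelled. *)

From Stdlib Require Import Reals List Lra Lia ClassicalEpsilon Factorial.
From Coquelicot Require Import Coquelicot.
Import ListNotations.
Open Scope R_scope.

(** * Gauss's sequence on the positive reals *)

Fixpoint Rpoch0 (r : R) (n : nat) : R :=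
  match n with
  | O => r
  | S m => Rpoch0 r m * (r + INR (S m))
  end.

Definition gauss_seqR (r : R) (n : nat) : R :=
  exp (r * ln (INR n)) * INR (fact n) / Rpoch0 r n.

Lemma Rpoch0_pos r n : 0 < r -> 0 < Rpoch0 r n.
Proof.
  intros Hr; induction n as [|n IH]; cbn [Rpoch0]; [lra|].
  pose proof (pos_INR (S n)); apply Rmult_lt_0_compat; lra.
Qed.

Lemma gauss_seqR_pos r n : 0 < r -> 0 < gauss_seqR r n.
Proof.
  intros Hr; unfold gauss_seqR.
  pose proof (Rpoch0_pos r n Hr); pose proof (exp_pos (r * ln (INR n))).
  pose proof (INR_fact_lt_0 n).
  apply Rdiv_lt_0_compat; [apply Rmult_lt_0_compat|]; assumption.
Qed.

Lemma ln_le_sub1 y : 0 < y -> ln y <= y - 1.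
Proof.
  intros Hy; rewrite <- (ln_exp (y - 1)).
  apply ln_le; [exact Hy | pose proof (exp_ineq1_le (y - 1)); lra].
Qed.

Lemma ln_succ_sub_bounds n : (1 <= n)%nat ->
  / INR (S n) <= ln (INR (S n)) - ln (INR n) <= / INR n.
Proof.
  intros Hn; assert (Hn0 : 0 < INR n) by (apply lt_0_INR; lia).
  rewrite S_INR; split.
  - assert (H : ln (INR n / (INR n + 1)) <= INR n / (INR n + 1) - 1)
      by (apply ln_le_sub1, Rdiv_lt_0_compat; lra).
    rewrite ln_div in H by lra.
    replace (INR n / (INR n + 1) - 1) with (- / (INR n + 1)) in H by (field; lra).
    lra.
  - assert (H : ln ((INR n + 1) / INR n) <= (INR n + 1) / INR n - 1)
      by (apply ln_le_sub1, Rdiv_lt_0_compat; lra).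
    rewrite ln_div in H by lra.
    replace ((INR n + 1) / INR n - 1) with (/ INR n) in H by (field; lra).
    lra.
Qed.

Lemma exp_le_exp x y : x <= y -> exp x <= exp y.
Proof. intros [H|H]; [apply Rlt_le, exp_increasing, H | rewrite H; apply Rle_refl]. Qed.

Lemma gauss_seqR_succ r n : 0 < r ->
  gauss_seqR r (S n) =
  gauss_seqR r n * (exp (r * (ln (INR (S n)) - ln (INR n))) * (INR (S n) / (r + INR (S n)))).
Proof.
  intros Hr; unfold gauss_seqR.
  replace (r * ln (INR (S n))) with (r * ln (INR n) + r * (ln (INR (S n)) - ln (INR n)))
    by ring.
  rewrite exp_plus, fact_simpl, mult_INR; cbn [Rpoch0].
  pose proof (Rpoch0_pos r n Hr); pose proof (pos_INR (S n)).
  field; lra.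
Qed.

Lemma gauss_seqR_le_succ r n : 0 < r -> (1 <= n)%nat ->
  gauss_seqR r n <= gauss_seqR r (S n).
Proof.
  intros Hr Hn; rewrite (gauss_seqR_succ r n Hr).
  destruct (ln_succ_sub_bounds n Hn) as [Hd _].
  set (d := ln (INR (S n)) - ln (INR n)) in *.
  assert (HSn : 0 < INR (S n)) by (apply lt_0_INR; lia).
  assert (Hrd : 1 + r / INR (S n) <= exp (r * d)).
  { apply (Rle_trans _ (1 + r * d)); [|apply exp_ineq1_le].
    unfold Rdiv; apply Rplus_le_compat_l, Rmult_le_compat_l; lra. }
  assert (Hone : (1 + r / INR (S n)) * (INR (S n) / (r + INR (S n))) = 1)
    by (field; lra).
  pose proof (gauss_seqR_pos r n Hr).
  rewrite <- (Rmult_1_r (gauss_seqR r n)) at 1.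
  apply Rmult_le_compat_l; [lra|]; rewrite <- Hone.
  apply Rmult_le_compat_r; [apply Rlt_le, Rdiv_lt_0_compat|]; lra.
Qed.

Lemma gauss_seqR_succ_le r n : 0 < r -> (1 <= n)%nat ->
  gauss_seqR r (S n) * exp (r * (1 + r) / INR (S n)) <=
  gauss_seqR r n * exp (r * (1 + r) / INR n).
Proof.
  intros Hr Hn; rewrite (gauss_seqR_succ r n Hr).
  destruct (ln_succ_sub_bounds n Hn) as [_ Hd].
  set (d := ln (INR (S n)) - ln (INR n)) in *.
  assert (HN : 0 < INR n) by (apply lt_0_INR; lia).
  rewrite S_INR in *; set (N := INR n) in *.
  (* [1 + x <= exp x] at [x = - r / (r + N + 1)] *)
  assert (Hfrac : (N + 1) / (r + (N + 1)) <= exp (- (r / (r + (N + 1))))).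
  { eapply Rle_trans; [|apply exp_ineq1_le]; right; field; lra. }
  assert (Hexp : exp (r * d) <= exp (r / N))
    by (apply exp_le_exp; unfold Rdiv; apply Rmult_le_compat_l; lra).
  assert (Hexps : r / N - r / (r + (N + 1)) + r * (1 + r) / (N + 1) <= r * (1 + r) / N).
  { assert (E : r * (1 + r) / N - r * (1 + r) / (N + 1) - (r / N - r / (r + (N + 1)))
               = r * (1 + r) * r / (N * (N + 1) * (r + (N + 1)))) by (field; lra).
    assert (0 <= r * (1 + r) * r / (N * (N + 1) * (r + (N + 1)))).
    { apply Rle_mult_inv_pos; [|apply Rmult_lt_0_compat; [apply Rmult_lt_0_compat|]]; nra. }
    lra. }
  pose proof (gauss_seqR_pos r n Hr).
  rewrite !Rmult_assoc; apply Rmult_le_compat_l; [lra|]; rewrite <- Rmult_assoc.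
  apply (Rle_trans _ (exp (r / N) * exp (- (r / (r + (N + 1)))) * exp (r * (1 + r) / (N + 1)))).
  - apply Rmult_le_compat_r; [apply Rlt_le, exp_pos|].
    apply Rmult_le_compat; try (apply Rlt_le; first [apply exp_pos | apply Rdiv_lt_0_compat]); lra.
  - rewrite <- !exp_plus; apply exp_le_exp; lra.
Qed.

Lemma gauss_seqR_le_bound r n : 0 < r -> (1 <= n)%nat ->
  gauss_seqR r n <= gauss_seqR r 1 * exp (r * (1 + r)).
Proof.
  intros Hr Hn.
  assert (Hmono : gauss_seqR r n * exp (r * (1 + r) / INR n) <= gauss_seqR r 1 * exp (r * (1 + r))).
  { induction Hn as [|n Hn IH].
    - rewrite Rdiv_1_r; apply Rle_refl.
    - eapply Rle_trans; [apply gauss_seqR_succ_le|]; assumption. }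
  assert (HK : 0 <= r * (1 + r) / INR n)
    by (apply Rle_mult_inv_pos; [nra | apply lt_0_INR; lia]).
  pose proof (exp_ineq1_le (r * (1 + r) / INR n)); pose proof (gauss_seqR_pos r n Hr).
  eapply Rle_trans; [|exact Hmono].
  rewrite <- (Rmult_1_r (gauss_seqR r n)) at 1; apply Rmult_le_compat_l; lra.
Qed.

(* [gauss_seqR r 0] is junk ([ln 0 = 0]), so the monotone sequence starts at [n = 1]. *)
Lemma gauss_seqR_cvg r : 0 < r -> exists l, 0 < l /\ is_lim_seq (gauss_seqR r) l.
Proof.
  intros Hr.
  destruct (ex_finite_lim_seq_incr (fun n => gauss_seqR r (S n))
              (gauss_seqR r 1 * exp (r * (1 + r)))) as [l Hl].
  - intros n; apply gauss_seqR_le_succ; [exact Hr | lia].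
  - intros n; apply gauss_seqR_le_bound; [exact Hr | lia].
  - exists l; split.
    + apply (Rlt_le_trans _ (gauss_seqR r 1)); [apply gauss_seqR_pos, Hr|].
      apply (is_lim_seq_incr_compare _ _ Hl
               (fun n => gauss_seqR_le_succ r (S n) Hr ltac:(lia)) 0%nat).
    + apply is_lim_seq_incr_1, Hl.
Qed.

Lemma Rpoch0_succ_shift r n : r * Rpoch0 (r + 1) n = Rpoch0 r (S n).
Proof.
  induction n as [|n IH]; cbn [Rpoch0] in *.
  - simpl INR; ring.
  - rewrite <- Rmult_assoc, IH; cbn [Rpoch0]; rewrite !S_INR; ring.
Qed.

Lemma gauss_seqR_shift r n : 0 < r -> (1 <= n)%nat ->
  gauss_seqR (r + 1) n = gauss_seqR r n * (r * INR n / (r + INR n + 1)).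
Proof.
  intros Hr Hn; unfold gauss_seqR.
  assert (HN : 0 < INR n) by (apply lt_0_INR; lia).
  assert (Hpow : exp ((r + 1) * ln (INR n)) = exp (r * ln (INR n)) * INR n).
  { rewrite Rmult_plus_distr_r, Rmult_1_l, exp_plus, exp_ln; trivial. }
  assert (Hpoch : Rpoch0 (r + 1) n = Rpoch0 r n * (r + INR n + 1) / r).
  { pose proof (Rpoch0_succ_shift r n) as E; cbn [Rpoch0] in E; rewrite S_INR in E.
    apply (Rmult_eq_reg_l r); [rewrite E; field|]; lra. }
  pose proof (Rpoch0_pos r n Hr).
  rewrite Hpow, Hpoch; field; lra.
Qed.

Lemma is_lim_seq_shift_ratio r : 0 < r -> is_lim_seq (fun n => r * INR n / (r + INR n + 1)) r.
Proof.
  intros Hr.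
  apply is_lim_seq_ext with (fun n => r - r * (r + 1) * / (INR n + (r + 1))).
  { intros n; pose proof (pos_INR n); field; lra. }
  replace (Finite r) with (Finite (r - r * (r + 1) * 0)) by (f_equal; ring).
  apply is_lim_seq_minus'; [apply is_lim_seq_const|].
  apply (is_lim_seq_scal_l _ _ (Finite 0)).
  replace (Finite 0) with (Rbar_inv p_infty) by reflexivity.
  apply is_lim_seq_inv; [|discriminate].
  eapply is_lim_seq_plus; [apply is_lim_seq_INR | apply is_lim_seq_const | reflexivity].
Qed.

Fixpoint pochhammer (r : R) (m : nat) : R :=
  match m with
  | O => 1
  | S k => pochhammer r k * (r + INR k)
  end.

Lemma pochhammer_pos r m : 0 < r -> 0 < pochhammer r m.
Proof.
  intros Hr; induction m as [|m IH]; cbn [pochhammer]; [lra|].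
  pose proof (pos_INR m); apply Rmult_lt_0_compat; lra.
Qed.

Lemma is_lim_gauss_seqR_add_nat r (l : R) m : 0 < r -> is_lim_seq (gauss_seqR r) l ->
  is_lim_seq (gauss_seqR (r + INR m)) (l * pochhammer r m).
Proof.
  intros Hr Hl; induction m as [|m IH].
  - cbn [pochhammer INR]; rewrite Rplus_0_r, Rmult_1_r; exact Hl.
  - rewrite S_INR, <- Rplus_assoc; cbn [pochhammer]; rewrite <- Rmult_assoc.
    assert (Hrm : 0 < r + INR m) by (pose proof (pos_INR m); lra).
    apply is_lim_seq_ext_loc with
      (fun n => gauss_seqR (r + INR m) n * ((r + INR m) * INR n / (r + INR m + INR n + 1))).
    + exists 1%nat; intros n Hn; symmetry; apply gauss_seqR_shift; assumption.
    + apply is_lim_seq_mult'; [exact IH | apply is_lim_seq_shift_ratio, Hrm].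
Qed.

(** * The Gamma function on the positive reals *)

Lemma C_lim_seq_unique (u : nat -> C) (l1 l2 : C) :
  filterlim u eventually (locally l1) -> filterlim u eventually (locally l2) -> l1 = l2.
Proof.
  exact (@filterlim_locally_unique nat C_AbsRing C_NormedModule eventually
           (Proper_StrongProper _ eventually_filter) u l1 l2).
Qed.

Lemma filterlim_RtoC (u : nat -> R) (l : R) : is_lim_seq u l ->
  filterlim (fun n => RtoC (u n)) eventually (locally (RtoC l)).
Proof.
  intros H; apply filterlim_locally; intros eps.
  apply is_lim_seq_spec in H; destruct (H eps) as [N HN].
  exists N; intros n Hn; split; [apply HN, Hn | apply ball_center].
Qed.

Lemma Cpoch0_RtoC r n : Cpoch0 (RtoC r) n = RtoC (Rpoch0 r n).
Proof.
  induction n as [|n IH]; cbn [Cpoch0 Rpoch0]; [reflexivity|].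
  rewrite IH, <- RtoC_plus, <- RtoC_mult; reflexivity.
Qed.

Lemma Cexp_RtoC r : Cexp (RtoC r) = RtoC (exp r).
Proof. unfold Cexp, RtoC; simpl; rewrite cos_0, sin_0; f_equal; ring. Qed.

Lemma gauss_seq_RtoC r n : 0 < r -> gauss_seq (RtoC r) n = RtoC (gauss_seqR r n).
Proof.
  intros Hr; unfold gauss_seq, gauss_seqR.
  rewrite Cpoch0_RtoC, <- RtoC_mult, Cexp_RtoC, <- RtoC_mult, <- RtoC_div; [reflexivity|].
  pose proof (Rpoch0_pos r n Hr); lra.
Qed.

Lemma CGamma_RtoC r (l : R) : 0 < r -> is_lim_seq (gauss_seqR r) l -> CGamma (RtoC r) = RtoC l.
Proof.
  intros Hr Hl.
  assert (Hf : filterlim (gauss_seq (RtoC r)) eventually (locally (RtoC l))).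
  { eapply filterlim_ext; [intros n; symmetry; apply gauss_seq_RtoC, Hr|].
    apply filterlim_RtoC, Hl. }
  apply (C_lim_seq_unique (gauss_seq (RtoC r))); [|exact Hf].
  apply (epsilon_spec (inhabits (RtoC 0))
           (fun l => filterlim (gauss_seq (RtoC r)) eventually (locally l))).
  exists (RtoC l); exact Hf.
Qed.

Lemma CGamma_RtoC_neq0 r : 0 < r -> CGamma (RtoC r) <> RtoC 0.
Proof.
  intros Hr; destruct (gauss_seqR_cvg r Hr) as [l [Hl0 Hl]].
  rewrite (CGamma_RtoC r l Hr Hl); intros E; apply RtoC_inj in E; lra.
Qed.

Lemma CGamma_add_nat r m : 0 < r ->
  CGamma (RtoC (r + INR m)) = (CGamma (RtoC r) * RtoC (pochhammer r m))%C.
Proof.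
  intros Hr; destruct (gauss_seqR_cvg r Hr) as [l [_ Hl]].
  assert (Hrm : 0 < r + INR m) by (pose proof (pos_INR m); lra).
  rewrite (CGamma_RtoC r l Hr Hl), <- RtoC_mult.
  apply CGamma_RtoC; [exact Hrm | apply is_lim_gauss_seqR_add_nat; assumption].
Qed.

Lemma INR_fact_5m m :
  INR (fact (5 * m)) = 5 ^ (5 * m) * INR (fact m) *
    pochhammer (1/5) m * pochhammer (2/5) m * pochhammer (3/5) m * pochhammer (4/5) m.
Proof.
  induction m as [|m IH]; [simpl; ring|].
  replace (5 * S m)%nat with (S (S (S (S (S (5 * m))))))%nat by lia.
  rewrite !fact_simpl, !mult_INR, IH; cbn [pochhammer].
  replace (5 ^ S (S (S (S (S (5 * m)))))) with (5 ^ (5 * m) * 5 ^ 5)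
    by (rewrite <- pow_add; f_equal; lia).
  rewrite !S_INR, mult_INR; replace (INR 5) with 5 by (simpl; ring).
  field.
Qed.

(** * Series and the fifth roots of unity *)

Lemma CSeries_correct (a : nat -> C) : ex_series a -> is_series a (CSeries a).
Proof.
  intros [l Hl]; exact (epsilon_spec (inhabits (RtoC 0)) (is_series a) (ex_intro _ l Hl)).
Qed.

Lemma is_series_sum_n (T : nat -> nat -> C) (V : nat -> C) N :
  (forall k, (k <= N)%nat -> is_series (T k) (V k)) ->
  is_series (fun n => sum_n (fun k => T k n) N) (sum_n V N).
Proof.
  induction N as [|N IH]; intros HT.
  - apply (is_series_ext (T 0%nat)); [intros n; rewrite sum_O; reflexivity|].
    rewrite sum_O; apply HT; lia.
  - apply (is_series_ext (fun n => plus (sum_n (fun k => T k n) N) (T (S N) n))).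
    { intros n; rewrite sum_Sn; reflexivity. }
    rewrite sum_Sn; apply (@is_series_plus C_AbsRing C_NormedModule);
      [apply IH; intros k Hk|]; apply HT; lia.
Qed.

Lemma is_series_subseq_mul (F : nat -> C) (L : C) p : (1 <= p)%nat ->
  (forall q r, (0 < r < p)%nat -> F (p * q + r)%nat = RtoC 0) ->
  is_series F L -> is_series (fun q => F (p * q)%nat) L.
Proof.
  intros Hp Hzero HL.
  assert (Hblock : forall q, sum_n_m F (p * q + 1) (p * q + (p - 1)) = zero).
  { intros q; rewrite <- (sum_n_m_const_zero (p * q + 1) (p * q + (p - 1))).
    apply sum_n_m_ext_loc; intros k Hk.
    replace k with (p * q + (k - p * q))%nat by lia; apply Hzero; lia. }
  assert (Hpart : forall m, sum_n (fun q => F (p * q)%nat) m = sum_n F (p * m + (p - 1))).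
  { induction m as [|m IH].
    - rewrite sum_O, Nat.mul_0_r, Nat.add_0_l; unfold sum_n.
      rewrite (sum_n_m_Chasles _ 0 0 (p - 1)) by lia.
      pose proof (Hblock 0%nat) as H0; rewrite Nat.mul_0_r, !Nat.add_0_l in H0.
      rewrite sum_n_n, H0, plus_zero_r; reflexivity.
    - rewrite sum_Sn, IH; unfold sum_n.
      rewrite (sum_n_m_Chasles _ 0 (p * m + (p - 1)) (p * S m + (p - 1))) by lia.
      rewrite (sum_n_m_Chasles _ (S (p * m + (p - 1))) (p * S m) (p * S m + (p - 1))) by lia.
      replace (S (p * m + (p - 1))) with (p * S m)%nat by lia.
      replace (S (p * S m)) with (p * S m + 1)%nat by lia.
      rewrite sum_n_n, Hblock, plus_zero_r; reflexivity. }
  unfold is_series; eapply filterlim_ext; [intros m; symmetry; apply Hpart|].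
  eapply filterlim_comp; [|exact HL].
  intros P [N HN]; exists N; intros n Hn; apply HN; nia.
Qed.

Lemma is_series_C_unique (a : nat -> C) (l1 l2 : C) :
  is_series a l1 -> is_series a l2 -> l1 = l2.
Proof. apply C_lim_seq_unique. Qed.

Lemma sum_n_Cpow_mul_sub1 (b : C) n : ((b - 1) * sum_n (Cpow b) n = Cpow b (S n) - 1)%C.
Proof.
  induction n as [|n IH].
  - rewrite sum_O; simpl; ring.
  - rewrite sum_Sn; change (plus ?u ?v) with (u + v)%C.
    rewrite Cmult_plus_distr_l, IH, (Cpow_S b (S n)); ring.
Qed.

Lemma sum_n_Cpow_root_of_unity (b : C) p :
  Cpow b (S p) = RtoC 1 -> b <> RtoC 1 -> sum_n (Cpow b) p = RtoC 0.
Proof.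
  intros Hp Hb.
  assert (Hb1 : (b - 1)%C <> RtoC 0) by (intros E; apply Hb, Ceq_minus, E).
  change (@eq C (sum_n (Cpow b) p) (RtoC 0)).
  replace (sum_n (Cpow b) p) with (/ (b - 1) * ((b - 1) * sum_n (Cpow b) p))%C
    by (field; exact Hb1).
  rewrite sum_n_Cpow_mul_sub1, Hp; ring.
Qed.

Lemma Cpow_alpha5 k : Cpow alpha5 k = (cos (2 * PI / 5 * INR k), sin (2 * PI / 5 * INR k)).
Proof.
  induction k as [|k IH].
  - simpl; rewrite Rmult_0_r, cos_0, sin_0; reflexivity.
  - rewrite Cpow_S, IH, S_INR; unfold alpha5, Cexp; simpl; rewrite exp_0.
    replace (2 * PI / 5 * (INR k + 1)) with (2 * PI / 5 * INR k + 2 * PI / 5) by ring.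
    rewrite cos_plus, sin_plus; unfold Cmult; simpl; f_equal; ring.
Qed.

Lemma Cpow_alpha5_5 : Cpow alpha5 5 = RtoC 1.
Proof.
  rewrite Cpow_alpha5; replace (2 * PI / 5 * INR 5) with (2 * PI) by (simpl; field).
  rewrite cos_2PI, sin_2PI; reflexivity.
Qed.

Lemma Cpow_alpha5_neq1 r : (0 < r < 5)%nat -> Cpow alpha5 r <> RtoC 1.
Proof.
  intros Hr E; rewrite Cpow_alpha5 in E; injection E as _ Hsin.
  pose proof PI_RGT_0.
  assert (r = 1 \/ r = 2 \/ r = 3 \/ r = 4)%nat as [Er|[Er|[Er|Er]]] by lia;
    subst r; simpl INR in Hsin.
  - pose proof (sin_gt_0 (2 * PI / 5 * 1)); lra.
  - pose proof (sin_gt_0 (2 * PI / 5 * (1 + 1))); lra.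
  - pose proof (sin_lt_0 (2 * PI / 5 * (1 + 1 + 1))); lra.
  - pose proof (sin_lt_0 (2 * PI / 5 * (1 + 1 + 1 + 1))); lra.
Qed.

Lemma Cpow_alpha5_eq1 j : Cpow alpha5 j = RtoC 1 <-> Nat.divide 5 j.
Proof.
  split.
  - intros E; exists (j / 5)%nat.
    pose proof (Nat.div_mod_eq j 5) as Hj; pose proof (Nat.mod_upper_bound j 5 ltac:(lia)).
    destruct (Nat.eq_dec (j mod 5) 0) as [H0|H0]; [lia|].
    exfalso; apply (Cpow_alpha5_neq1 (j mod 5)); [lia|].
    rewrite Hj, Cpow_add_r, Cpow_mult_r, Cpow_alpha5_5, Cpow_1_l, Cmult_1_l in E; exact E.
  - intros [q Hq]; subst j; rewrite Nat.mul_comm, Cpow_mult_r, Cpow_alpha5_5, Cpow_1_l; reflexivity.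
Qed.

Lemma sum_n_Cpow_alpha5_dvd j : Nat.divide 5 j -> sum_n (Cpow (Cpow alpha5 j)) 4 = RtoC 5.
Proof.
  intros Hj; apply Cpow_alpha5_eq1 in Hj; rewrite Hj.
  rewrite !sum_Sn, sum_O, !Cpow_1_l.
  change (@eq C (RtoC 1 + RtoC 1 + RtoC 1 + RtoC 1 + RtoC 1)%C (RtoC 5)).
  rewrite <- !RtoC_plus; f_equal; ring.
Qed.

Lemma sum_n_Cpow_alpha5_ndvd j : ~ Nat.divide 5 j -> sum_n (Cpow (Cpow alpha5 j)) 4 = RtoC 0.
Proof.
  intros Hj; apply sum_n_Cpow_root_of_unity.
  - rewrite <- Cpow_mult_r, Nat.mul_comm, Cpow_mult_r, Cpow_alpha5_5, Cpow_1_l; reflexivity.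
  - rewrite Cpow_alpha5_eq1; exact Hj.
Qed.

Lemma is_series_alpha5_filter (A V : nat -> C) :
  (forall k, (k <= 4)%nat -> is_series (fun n => A n * Cpow (Cpow alpha5 (2 * n)) k)%C (V k)) ->
  is_series (fun q => A (5 * q)%nat * RtoC 5)%C (sum_n V 4).
Proof.
  intros HV.
  assert (Hsum : is_series (fun n => A n * sum_n (Cpow (Cpow alpha5 (2 * n))) 4)%C (sum_n V 4)).
  { apply (is_series_ext (fun n => sum_n (fun k => A n * Cpow (Cpow alpha5 (2 * n)) k)%C 4)).
    - intros n; apply (@sum_n_mult_l C_Ring).
    - apply is_series_sum_n, HV. }
  apply (is_series_ext (fun q => A (5 * q)%nat * sum_n (Cpow (Cpow alpha5 (2 * (5 * q)))) 4)%C).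
  - intros q; rewrite sum_n_Cpow_alpha5_dvd; [reflexivity | exists (2 * q)%nat; lia].
  - apply (is_series_subseq_mul (fun n => A n * sum_n (Cpow (Cpow alpha5 (2 * n))) 4)%C _ 5);
      [lia | | exact Hsum].
    intros q r Hr; rewrite sum_n_Cpow_alpha5_ndvd; [ring | intros [m Hm]; lia].
Qed.

(** * Terms of Fox--Wright series *)

Lemma Cinv_0 : Cinv (RtoC 0) = RtoC 0.
Proof.
  unfold Cinv; simpl.
  apply injective_projections; simpl; unfold Rdiv; rewrite ?Ropp_0; apply Rmult_0_l.
Qed.

(* No hypothesis on [b]: when [b = 0] both sides are [0], as [Cinv 0 = 0]. *)
Lemma Cdiv_mult_l (a p b : C) : p <> RtoC 0 -> (a / (p * b) = a / b / p)%C.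
Proof.
  intros Hp; destruct (Ceq_dec b (RtoC 0)) as [->|Hb].
  - unfold Cdiv; rewrite Cmult_0_r, Cinv_0; ring.
  - field; auto.
Qed.

Lemma Gamma_prod_app (l1 l2 : list (C * R)) n :
  Gamma_prod (l1 ++ l2) n = (Gamma_prod l1 n * Gamma_prod l2 n)%C.
Proof.
  induction l1 as [|p l IH]; simpl; [ring|].
  unfold Gamma_prod in *; rewrite IH; ring.
Qed.

Lemma Gamma_prod_scale_pars (s : R) k ps n : s = INR k ->
  Gamma_prod (scale_pars s ps) n = Gamma_prod ps (k * n).
Proof.
  intros ->; induction ps as [|p ps IH]; [reflexivity|].
  unfold Gamma_prod, scale_pars in *; cbn [map fold_right fst snd] in *.
  rewrite IH, mult_INR, (Rmult_comm (INR k)), Rmult_assoc; reflexivity.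
Qed.

Lemma FW_term_scal (als bes : list (C * R)) z w n :
  FW_term als bes (z * w)%C n = (FW_term als bes z n * Cpow w n)%C.
Proof. unfold FW_term, Cdiv; rewrite Cpow_mult_l; ring. Qed.

Lemma FW_term_rotate (als bes : list (C * R)) c x w k n :
  FW_term als bes (c * Cpow (x * Cpow w k) 2)%C n =
  (FW_term als bes (c * Cpow x 2)%C n * Cpow (Cpow w (2 * n)) k)%C.
Proof.
  replace (c * Cpow (x * Cpow w k) 2)%C with (c * Cpow x 2 * Cpow (Cpow w k) 2)%C
    by (rewrite Cpow_mult_l; ring).
  rewrite FW_term_scal, <- !Cpow_mult_r, (Nat.mul_comm k); reflexivity.
Qed.

Lemma Gamma_prod_fifths q :
  Gamma_prod [(RtoC (1/5), 1); (RtoC (2/5), 1); (RtoC (3/5), 1); (RtoC (4/5), 1)] q =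
  (CGamma (RtoC (1/5)) * RtoC (pochhammer (1/5) q) *
   (CGamma (RtoC (2/5)) * RtoC (pochhammer (2/5) q) *
    (CGamma (RtoC (3/5)) * RtoC (pochhammer (3/5) q) *
     (CGamma (RtoC (4/5)) * RtoC (pochhammer (4/5) q)))))%C.
Proof.
  unfold Gamma_prod; cbn [fold_right fst snd]; rewrite !Rmult_1_l, <- !RtoC_plus.
  rewrite !CGamma_add_nat by lra; ring.
Qed.

Lemma FW_term_mul5 (als bes : list (C * R)) z q :
  (CGamma (RtoC (1/5)) * (CGamma (RtoC (2/5)) * (CGamma (RtoC (3/5)) * CGamma (RtoC (4/5)))) *
   FW_term (scale_pars 5 als)
     ([(RtoC (1/5), 1); (RtoC (2/5), 1); (RtoC (3/5), 1); (RtoC (4/5), 1)] ++ scale_pars 5 bes)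
     (Cpow (z / RtoC 5) 5) q)%C
  = FW_term als bes z (5 * q).
Proof.
  assert (HR : forall r, 0 < r -> RtoC r <> RtoC 0) by (intros r Hr E; apply RtoC_inj in E; lra).
  pose proof (HR _ (pochhammer_pos (1/5) q ltac:(lra))).
  pose proof (HR _ (pochhammer_pos (2/5) q ltac:(lra))).
  pose proof (HR _ (pochhammer_pos (3/5) q ltac:(lra))).
  pose proof (HR _ (pochhammer_pos (4/5) q ltac:(lra))).
  pose proof (HR _ (INR_fact_lt_0 q)); pose proof (HR _ (pow_lt 5 (5 * q) ltac:(lra))).
  pose proof (CGamma_RtoC_neq0 (1/5) ltac:(lra)); pose proof (CGamma_RtoC_neq0 (2/5) ltac:(lra)).
  pose proof (CGamma_RtoC_neq0 (3/5) ltac:(lra)); pose proof (CGamma_RtoC_neq0 (4/5) ltac:(lra)).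
  assert (Hpow : Cpow (Cpow (z / RtoC 5) 5) q = (Cpow z (5 * q) / RtoC (5 ^ (5 * q)))%C).
  { rewrite <- Cpow_mult_r; unfold Cdiv; rewrite Cpow_mult_l, Cpow_inv, RtoC_pow; [reflexivity|].
    apply HR; lra. }
  unfold FW_term.
  rewrite Gamma_prod_app, !(Gamma_prod_scale_pars 5 5) by (simpl; ring).
  rewrite Gamma_prod_fifths, Cdiv_mult_l by (repeat apply Cmult_neq_0; assumption).
  rewrite Hpow, INR_fact_5m, !RtoC_mult.
  set (Q := (Gamma_prod als (5 * q) / Gamma_prod bes (5 * q))%C).
  field; repeat split; assumption.
Qed.

Theorem theorem3 (c x : C) (als bes : list (C * R)) :
  (* A_j, B_j nonzero reals *)
  (forall p, In p als -> snd p <> 0) ->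
  (forall p, In p bes -> snd p <> 0) ->
  (* all Gamma functions involved are well defined *)
  (forall p n, In p als -> ~ Gamma_pole (Cplus (fst p) (RtoC (snd p * INR n)))) ->
  (forall p n, In p bes -> ~ Gamma_pole (Cplus (fst p) (RtoC (snd p * INR n)))) ->
  (* all series involved converge *)
  (forall k : nat, (k <= 4)%nat ->
     ex_series (FW_term als bes (Cmult c (Cpow (Cmult x (Cpow alpha5 k)) 2)))) ->
  ex_series (FW_term (scale_pars 5 als)
               ([(RtoC (1/5), 1); (RtoC (2/5), 1); (RtoC (3/5), 1); (RtoC (4/5), 1)]
                ++ scale_pars 5 bes)
               (Cpow (Cdiv (Cmult c (Cpow x 2)) (RtoC 5)) 5)) ->
  sum_n (fun k => FoxWright als bes (Cmult c (Cpow (Cmult x (Cpow alpha5 k)) 2))) 4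
  = Cmult (Cmult (RtoC 5)
             (Cmult (CGamma (RtoC (1/5)))
               (Cmult (CGamma (RtoC (2/5)))
                 (Cmult (CGamma (RtoC (3/5))) (CGamma (RtoC (4/5)))))))
          (FoxWright (scale_pars 5 als)
               ([(RtoC (1/5), 1); (RtoC (2/5), 1); (RtoC (3/5), 1); (RtoC (4/5), 1)]
                ++ scale_pars 5 bes)
               (Cpow (Cdiv (Cmult c (Cpow x 2)) (RtoC 5)) 5)).
Proof.
  (* The identity holds term by term whatever the values of the Gamma products. *)
  intros _ _ _ _ Hconv Hconv5.
  set (G := (CGamma (RtoC (1/5)) *
              (CGamma (RtoC (2/5)) * (CGamma (RtoC (3/5)) * CGamma (RtoC (4/5)))))%C).
  set (B := FW_term (scale_pars 5 als)
              ([(RtoC (1/5), 1); (RtoC (2/5), 1); (RtoC (3/5), 1); (RtoC (4/5), 1)]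
               ++ scale_pars 5 bes)
              (Cpow (Cdiv (Cmult c (Cpow x 2)) (RtoC 5)) 5)).
  set (A := FW_term als bes (c * Cpow x 2)%C).
  assert (Hlhs : is_series (fun q => A (5 * q)%nat * RtoC 5)%C
                   (sum_n (fun k => FoxWright als bes
                                      (Cmult c (Cpow (Cmult x (Cpow alpha5 k)) 2))) 4)).
  { apply is_series_alpha5_filter; intros k Hk.
    apply (is_series_ext _ _ _ (FW_term_rotate als bes c x alpha5 k)), CSeries_correct, Hconv, Hk. }
  assert (Hterm : forall q, (RtoC 5 * G * B q)%C = (A (5 * q)%nat * RtoC 5)%C).
  { intros q; unfold G, B, A; rewrite <- FW_term_mul5; ring. }
  apply (is_series_C_unique _ _ _ Hlhs), (is_series_ext _ _ _ Hterm).
  apply (@is_series_scal_l C_AbsRing C_NormedModule), CSeries_correct, Hconv5.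
Qed.
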